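(* Let $n\ge3$, $c>0$, and let $\omega$ be as in the context. Then: (i) for all $x\ge x_0$, $(\gamma(x)+nc)\,x\,\frac{\omega'(x)}{\omega(x)}=2\gamma(x)-x\gamma'(x)-3nc$; (ii) $2x_0\omega''(x_0)+\omega'(x_0)>0$ and $\lim_{x\to\infty}\left(2x\omega''(x)+\omega'(x)\right)>0$; (iii) $\omega(x)-x\omega'(x)$ is bounded on $[0,\infty)$.
   Context: Definition of $\gamma$: For $n\ge 3$, $c>0$ and $x\ge 0$ put $\alpha(x)=nc+\frac{n}{2(n-1)}x-\frac{n-2}{2(n-1)}\sqrt{x^2+4(n-1)cx}$, $y_n=4(1-n)+\frac{2(n^2-4)}{\sqrt{2n-5}}\cos\!\left(\frac13\arctan\frac{n^2-4n+6}{2(n-1)\sqrt{2n-5}}\right)$, $x_0=y_nc$, $\beta(x)=\alpha(x_0)+\alpha'(x_0)(x-x_0)+\frac12\alpha''(x_0)(x-x_0)^2$, and $\gamma(x)=\alpha(x)$ for $x\ge x_0$, $\gamma(x)=\beta(x)$ for $0\le x<x_0$. Definition of $\omega$: $\omega$ is a positive $C^2$ function on $[0,\infty)$ such that for $x\ge x_0$ \[\omega(x)=\frac{x^2}{\sqrt{x^2+4(n-1)cx}}\left[\left(1+\frac{n^2c}{x}\right)\frac{\frac{n}{n-2}-\left(1+4(n-1)c/x\right)^{-1/2}}{\frac{n}{n-2}+\left(1+4(n-1)c/x\right)^{-1/2}}\right]^2.\] (On $[0,x_0)$, $\omega$ is an arbitrary positive $C^2$ extension; derivatives at $x_0$ are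 those of this $C^2$ function.) *)

From Stdlib Require Import Reals Lra ClassicalEpsilon.
Open Scope R_scope.

Definition Dlim (f : R -> R) (x : R) : R :=
  epsilon (inhabits 0) (fun l => derivable_pt_lim f x l).

Definition alpha (n : nat) (c x : R) : R :=
  INR n * c + INR n / (2 * (INR n - 1)) * x
  - (INR n - 2) / (2 * (INR n - 1)) * sqrt (x ^ 2 + 4 * (INR n - 1) * c * x).

Definition y_n (n : nat) : R :=
  4 * (1 - INR n)
  + 2 * (INR n ^ 2 - 4) / sqrt (2 * INR n - 5)
    * cos (/ 3 * atan ((INR n ^ 2 - 4 * INR n + 6)
                       / (2 * (INR n - 1) * sqrt (2 * INR n - 5)))).

Definition x0 (n : nat) (c : R) : R := y_n n * c.

Definition beta (n : nat) (c x : R) : R :=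
  alpha n c (x0 n c)
  + Dlim (alpha n c) (x0 n c) * (x - x0 n c)
  + / 2 * Dlim (Dlim (alpha n c)) (x0 n c) * (x - x0 n c) ^ 2.

(* gamma is only meaningful on [0, oo); for x < x0 we use beta. *)
Definition gamma (n : nat) (c x : R) : R :=
  if Rle_dec (x0 n c) x then alpha n c x else beta n c x.

Definition omega_formula (n : nat) (c x : R) : R :=
  x ^ 2 / sqrt (x ^ 2 + 4 * (INR n - 1) * c * x)
  * ((1 + INR n ^ 2 * c / x)
     * (INR n / (INR n - 2) - / sqrt (1 + 4 * (INR n - 1) * c / x))
     / (INR n / (INR n - 2) + / sqrt (1 + 4 * (INR n - 1) * c / x))) ^ 2.

Definition cont_nonneg (f : R -> R) (x : R) : Prop :=
  limit1_in f (fun y => 0 <= y) (f x) x.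

Definition lim_infty (f : R -> R) (L : R) : Prop :=
  forall eps, eps > 0 -> exists M, forall x, x >= M -> Rabs (f x - L) < eps.

From Stdlib Require Import Reals Lra Psatz ClassicalEpsilon.
From Coquelicot Require Import Coquelicot.
Open Scope R_scope.

(* Substituting u = sqrt (1 + 4 (n - 1) c / x), which maps [x0, oo) decreasingly
   onto (1, u x0], turns omega, omega', 2 x omega'' + omega', omega - x omega' and
   alpha' into rational functions of u.  Then (i) is a rational identity;
   2 x omega'' + omega' = (n u - n + 2)^2 Z(u) / (32 (n - 1)^2 u^5) with a sextic Z
   that is positive for u > 1 and tends to 1 / (n - 1)^2 as x -> oo (u -> 1); and
   omega - x omega' = c (n u - n + 2)^3 (3 n u + n - 2) / (8 (n - 1) u^3) stays
   bounded for u in (1, u x0], while on [0, x0] continuity suffices. *)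

Lemma Dlim_unique f x l : derivable_pt_lim f x l -> Dlim f x = l.
Proof.
intros Hl; apply (uniqueness_limite f x); [|exact Hl].
exact (epsilon_spec (inhabits 0) (fun l => derivable_pt_lim f x l) (ex_intro _ l Hl)).
Qed.

Lemma derivable_pt_lim_ext_gt a f g x l :
  a < x -> (forall y, a < y -> f y = g y) ->
  derivable_pt_lim f x l -> derivable_pt_lim g x l.
Proof.
intros Hax Hfg Hf; apply is_derive_Reals, (is_derive_ext_loc f); [|now apply is_derive_Reals].
exists (mkposreal _ (proj2 (Rlt_0_minus _ _) Hax)); intros y Hy; apply Hfg.
apply Rabs_lt_between in Hy; simpl in Hy; unfold minus, plus, opp in Hy; simpl in Hy; lra.
Qed.

Lemma derivable_pt_lim_glue f g a l :
  derivable_pt_lim f a l -> derivable_pt_lim g a l -> f a = g a ->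
  derivable_pt_lim (fun y => if Rle_dec a y then f y else g y) a l.
Proof.
intros Hf Hg Ha eps Heps.
destruct (Hf eps Heps) as [d1 H1], (Hg eps Heps) as [d2 H2].
exists (mkposreal _ (Rmin_pos _ _ (cond_pos d1) (cond_pos d2))); intros h Hh0 Hh; simpl in Hh.
destruct (Rle_dec a a) as [_|]; [|lra].
destruct (Rle_dec a (a + h)).
- apply H1; auto; apply (Rlt_le_trans _ _ _ Hh), Rmin_l.
- rewrite Ha; apply H2; auto; apply (Rlt_le_trans _ _ _ Hh), Rmin_r.
Qed.

(* Difference quotients for small [h > 0] are computed from values on [[x, oo)] only. *)
Lemma derivable_pt_lim_unique_right f g x l1 l2 :
  derivable_pt_lim f x l1 -> derivable_pt_lim g x l2 ->
  (forall y, x <= y -> f y = g y) -> l1 = l2.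
Proof.
intros Hf Hg Hfg; apply Rminus_diag_uniq, Rabs_eq_0; apply Rle_antisym; [|apply Rabs_pos].
apply le_epsilon; intros e He.
assert (He2 : 0 < e / 2) by lra.
destruct (Hf _ He2) as [d1 H1], (Hg _ He2) as [d2 H2].
set (h := Rmin d1 d2 / 2).
assert (Hd := Rmin_pos _ _ (cond_pos d1) (cond_pos d2)).
assert (Hh : 0 < h) by (unfold h; lra).
assert (Habs : Rabs h < Rmin d1 d2) by (rewrite Rabs_pos_eq; unfold h; lra).
specialize (H1 h (Rgt_not_eq _ _ Hh) (Rlt_le_trans _ _ _ Habs (Rmin_l _ _))).
specialize (H2 h (Rgt_not_eq _ _ Hh) (Rlt_le_trans _ _ _ Habs (Rmin_r _ _))).
rewrite !Hfg in H1 by lra.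
replace (l1 - l2) with (((g (x + h) - g x) / h - l2) - ((g (x + h) - g x) / h - l1)) by ring.
eapply Rle_trans; [apply Rabs_triang|]; rewrite Rabs_Ropp; lra.
Qed.

Lemma derivative_eq_on_ray a f g f' g' :
  (forall x, a <= x -> derivable_pt_lim f x (f' x)) ->
  (forall x, a <= x -> derivable_pt_lim g x (g' x)) ->
  (forall x, a <= x -> f x = g x) ->
  forall x, a <= x -> f' x = g' x.
Proof.
intros Hf Hg Hfg x Hx.
apply (derivable_pt_lim_unique_right f g x); auto.
intros y Hy; apply Hfg; lra.
Qed.

Lemma lim_infty_ext_ge a f g L :
  (forall x, a <= x -> f x = g x) -> lim_infty g L -> lim_infty f L.
Proof.
intros Hfg Hg eps Heps; destruct (Hg eps Heps) as [M HM].
exists (Rmax a M); intros x Hx.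
rewrite Hfg by (pose proof (Rmax_l a M); lra); apply HM.
pose proof (Rmax_r a M); lra.
Qed.

Lemma bounded_on_nonneg h b M :
  cont_nonneg h 0 -> (forall x, 0 < x -> continuity_pt h x) ->
  (forall x, b <= x -> Rabs (h x) <= M) ->
  exists K, forall x, 0 <= x -> Rabs (h x) <= K.
Proof.
intros H0 Hcont Hfar.
destruct (H0 1 Rlt_0_1) as [a [Ha Hnear]].
assert (Hnear' : forall x, 0 <= x < a -> Rabs (h x) <= Rabs (h 0) + 1).
{ intros x Hx.
  assert (Hd : Rabs (h x - h 0) < 1).
  { apply (Hnear x); split; [lra|]; simpl; unfold R_dist; rewrite Rminus_0_r, Rabs_pos_eq; lra. }
  replace (h x) with ((h x - h 0) + h 0) by ring.
  pose proof (Rabs_triang (h x - h 0) (h 0)); lra. }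
set (b' := Rmax (a / 2) b).
destruct (continuity_ab_maj (fun x => Rabs (h x)) (a / 2) b' (Rmax_l _ _)) as [xm [Hmid _]].
{ intros x Hx; apply (continuity_pt_comp h Rabs); [apply Hcont; lra|apply Rcontinuity_abs]. }
set (K := Rmax (Rabs (h 0) + 1) (Rmax (Rabs (h xm)) M)).
assert (HK0 : Rabs (h 0) + 1 <= K) by apply Rmax_l.
assert (HKm : Rabs (h xm) <= K) by (eapply Rle_trans; [apply Rmax_l|apply Rmax_r]).
assert (HKM : M <= K) by (eapply Rle_trans; [apply Rmax_r|apply Rmax_r]).
exists K; intros x Hx.
destruct (Rlt_or_le x a) as [Hxa|Hax]; [pose proof (Hnear' x (conj Hx Hxa)); lra|].
destruct (Rle_or_lt b x) as [Hbx|Hxb]; [pose proof (Hfar x Hbx); lra|].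
assert (Hxb' : x <= b') by (pose proof (Rmax_r (a / 2) b); unfold b'; lra).
pose proof (Hmid x ltac:(lra)); lra.
Qed.

Lemma cos_third_atan_gt z : sqrt 3 / 2 < cos (/ 3 * atan z).
Proof.
assert (Hcos : forall y, 0 <= y < PI / 6 -> sqrt 3 / 2 < cos y).
{ intros y Hy; rewrite <- cos_PI6; apply cos_decreasing_1; pose proof PI_RGT_0; lra. }
pose proof (atan_bound z) as Hz.
destruct (Rle_or_lt 0 (atan z)).
- apply Hcos; lra.
- rewrite <- cos_neg; apply Hcos; lra.
Qed.

Lemma sqrt_quartic_bound N : 5 / 2 <= N ->
  4 * (N - 1) * sqrt (2 * N - 5) <= (N ^ 2 - 4) * sqrt 3.
Proof.
intros HN.
rewrite <- (sqrt_pow2 (4 * (N - 1))), <- (sqrt_pow2 (N ^ 2 - 4)), <- !sqrt_mult_alt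
  by (try apply pow2_ge_0; nra).
apply sqrt_le_1_alt.
(* The difference of the radicands is (N - 4)^2 (3 N^2 - 8 N + 8) *)
assert (0 <= (N - 4) ^ 2 * (3 * N ^ 2 - 8 * N + 8)) by (apply Rmult_le_pos; [apply pow2_ge_0|nra]).
nra.
Qed.

Lemma INR_ge_3 n : (3 <= n)%nat -> 3 <= INR n.
Proof. intros Hn; apply le_INR in Hn; simpl in Hn; lra. Qed.

Lemma y_n_pos n : (3 <= n)%nat -> 0 < y_n n.
Proof.
intros Hn; pose proof (INR_ge_3 n Hn) as HN; unfold y_n; set (N := INR n) in *.
assert (Hsq : 0 < sqrt (2 * N - 5)) by (apply sqrt_lt_R0; lra).
assert (Hbound := sqrt_quartic_bound N ltac:(lra)).
assert (Hcos := cos_third_atan_gt ((N ^ 2 - 4 * N + 6) / (2 * (N - 1) * sqrt (2 * N - 5)))).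
assert (Hcoef : 0 < 2 * (N ^ 2 - 4) / sqrt (2 * N - 5)) by (apply Rdiv_lt_0_compat; nra).
apply (Rmult_lt_compat_l _ _ _ Hcoef) in Hcos.
replace (2 * (N ^ 2 - 4) / sqrt (2 * N - 5) * (sqrt 3 / 2))
  with ((N ^ 2 - 4) * sqrt 3 / sqrt (2 * N - 5)) in Hcos by (field; lra).
assert (4 * (N - 1) <= (N ^ 2 - 4) * sqrt 3 / sqrt (2 * N - 5)).
{ apply (Rmult_le_reg_r (sqrt (2 * N - 5))); [exact Hsq|].
  replace ((N ^ 2 - 4) * sqrt 3 / sqrt (2 * N - 5) * sqrt (2 * N - 5))
    with ((N ^ 2 - 4) * sqrt 3) by (field; lra); lra. }
lra.
Qed.

Lemma x0_pos n c : (3 <= n)%nat -> 0 < c -> 0 < x0 n c.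
Proof. intros Hn Hc; apply Rmult_lt_0_compat; [apply y_n_pos|]; assumption. Qed.

Definition u_of (N c x : R) : R := sqrt (1 + 4 * (N - 1) * c / x).

(* With N = n and u = u_of N c x: omega_u = omega, omega1_u = omega',
   omega_combo_u = 2 x omega'' + omega', omega_defect_u = omega - x omega',
   alpha1_u = alpha'. *)
Definition omega_u (N c u : R) : R :=
  c * (N * u - (N - 2)) ^ 4 / (4 * (N - 1) * u * (u ^ 2 - 1)).

Definition omega1_u (N u : R) : R :=
  - (N * u - (N - 2)) ^ 3 * (N * u ^ 3 + 3 * (N - 2) * u ^ 2 - 3 * N * u - (N - 2))
  / (32 * (N - 1) ^ 2 * u ^ 3).

Definition omega_combo_poly (N u : R) : R :=
  2 * N ^ 2 * u ^ 6 + 4 * N * (N - 2) * u ^ 5 + (3 * N ^ 2 - 24 * N + 24) * u ^ 4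
  - 14 * N * (N - 2) * u ^ 3 - (4 * N ^ 2 - 28 * N + 28) * u ^ 2
  + 6 * N * (N - 2) * u + 3 * (N - 2) ^ 2.

Definition omega_combo_u (N u : R) : R :=
  (N * u - (N - 2)) ^ 2 * omega_combo_poly N u / (32 * (N - 1) ^ 2 * u ^ 5).

Definition omega_defect_u (N c u : R) : R :=
  c * (N * u - (N - 2)) ^ 3 * (3 * N * u + (N - 2)) / (8 * (N - 1) * u ^ 3).

Definition alpha1_u (N u : R) : R :=
  N / (2 * (N - 1)) - (N - 2) / (2 * (N - 1)) * (u - (u ^ 2 - 1) / (2 * u)).

Section Reparametrization.

Variables N c : R.
Hypothesis HN : 3 <= N.
Hypothesis Hc : 0 < c.

Lemma u_of_radicand_gt1 x : 0 < x -> 1 < 1 + 4 * (N - 1) * c / x.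
Proof. intros Hx; assert (0 < 4 * (N - 1) * c / x) by (apply Rdiv_lt_0_compat; nra); lra. Qed.

Lemma u_of_sqr x : 0 < x -> u_of N c x ^ 2 = 1 + 4 * (N - 1) * c / x.
Proof.
intros Hx; unfold u_of; rewrite pow2_sqrt; [reflexivity|].
pose proof (u_of_radicand_gt1 x Hx); lra.
Qed.

Lemma u_of_gt1 x : 0 < x -> 1 < u_of N c x.
Proof.
intros Hx; unfold u_of; rewrite <- sqrt_1 at 1; apply sqrt_lt_1_alt.
pose proof (u_of_radicand_gt1 x Hx); lra.
Qed.

Lemma u_of_inv x : 0 < x -> x = 4 * (N - 1) * c / (u_of N c x ^ 2 - 1).
Proof. intros Hx; rewrite u_of_sqr by exact Hx; field; split; nra. Qed.

Lemma u_of_decr x y : 0 < x <= y -> u_of N c y <= u_of N c x.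
Proof.
intros Hxy; apply sqrt_le_1_alt.
assert (/ y <= / x) by (apply Rinv_le_contravar; lra).
unfold Rdiv; assert (0 < 4 * (N - 1) * c) by nra; nra.
Qed.

Lemma sqrt_quad_u_of y : 0 < y -> sqrt (y ^ 2 + 4 * (N - 1) * c * y) = y * u_of N c y.
Proof.
intros Hy; unfold u_of.
replace (y ^ 2 + 4 * (N - 1) * c * y) with (y ^ 2 * (1 + 4 * (N - 1) * c / y)) by (field; lra).
rewrite sqrt_mult_alt, sqrt_pow2 by (try apply pow2_ge_0; lra); reflexivity.
Qed.

(* Replaces [x] by [4 (N - 1) c / (u^2 - 1)], keeping [u = u_of N c x > 1] abstract. *)
Ltac in_terms_of_u x :=
  let u := fresh "u" in let Hu := fresh "Hu" in let Hx := fresh "Hx" in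
  pose proof (u_of_gt1 x ltac:(lra)) as Hu;
  pose proof (u_of_inv x ltac:(lra)) as Hx;
  pose proof (u_of_radicand_gt1 x ltac:(lra));
  unfold u_of, Rdiv in *; set (u := sqrt (1 + 4 * (N - 1) * c * / x)) in *;
  repeat split; try lra; clearbody u; subst x.

Ltac solve_in_u :=
  match goal with
  | |- _ <> 0 => repeat apply Rmult_integral_contrapositive_currified; nra
  | |- _ => field; repeat split; nra
  end.

Lemma derive_omega_u x : 0 < x ->
  derivable_pt_lim (fun y => omega_u N c (u_of N c y)) x (omega1_u N (u_of N c x)).
Proof.
intros Hx; apply is_derive_Reals; unfold omega_u, omega1_u, u_of.
auto_derive; in_terms_of_u x; solve_in_u.
Qed.

Lemma derive_omega1_u x : 0 < x ->
  derivable_pt_lim (fun y => omega1_u N (u_of N c y)) x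
    ((omega_combo_u N (u_of N c x) - omega1_u N (u_of N c x)) / (2 * x)).
Proof.
intros Hx; apply is_derive_Reals; unfold omega1_u, omega_combo_u, omega_combo_poly, u_of.
auto_derive; in_terms_of_u x; solve_in_u.
Qed.

Lemma alpha_in_u n x : INR n = N -> 0 < x ->
  alpha n c x = N * c + N / (2 * (N - 1)) * x - (N - 2) / (2 * (N - 1)) * (x * u_of N c x).
Proof. intros Hn Hx; unfold alpha; rewrite Hn, sqrt_quad_u_of by exact Hx; reflexivity. Qed.

Lemma derive_alpha n x : INR n = N -> 0 < x ->
  derivable_pt_lim (alpha n c) x (alpha1_u N (u_of N c x)).
Proof.
intros Hn Hx.
apply (derivable_pt_lim_ext_gt 0 (fun y => N * c + N / (2 * (N - 1)) * y
  - (N - 2) / (2 * (N - 1)) * (y * u_of N c y))); [exact Hx| |].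
- intros y Hy; symmetry; apply alpha_in_u; assumption.
- apply is_derive_Reals; unfold alpha1_u, u_of.
  auto_derive; in_terms_of_u x; solve_in_u.
Qed.

Lemma omega_formula_in_u n x : INR n = N -> 0 < x ->
  omega_formula n c x = omega_u N c (u_of N c x).
Proof.
intros Hn Hx; unfold omega_formula; rewrite Hn, sqrt_quad_u_of by exact Hx.
fold (u_of N c x); in_terms_of_u x.
unfold omega_u; solve_in_u.
Qed.

Lemma omega_defect_in_u x : 0 < x ->
  omega_u N c (u_of N c x) - x * omega1_u N (u_of N c x) = omega_defect_u N c (u_of N c x).
Proof.
intros Hx; in_terms_of_u x.
unfold omega_u, omega1_u, omega_defect_u; solve_in_u.
Qed.

Lemma omega_equation_in_u n x : INR n = N -> 0 < x ->
  (alpha n c x + N * c) * x * (omega1_u N (u_of N c x) / omega_u N c (u_of N c x))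
  = 2 * alpha n c x - x * alpha1_u N (u_of N c x) - 3 * N * c.
Proof.
intros Hn Hx; rewrite alpha_in_u by assumption; in_terms_of_u x.
unfold omega_u, omega1_u, alpha1_u; solve_in_u.
Qed.

(* In [t = u - 1 > 0] and [s = N - 3 >= 0] every coefficient is nonnegative,
   except for the block [8 - 8 ts + 42 (ts)^2], a positive definite quadratic in [ts]. *)
Lemma omega_combo_poly_pos u : 1 < u -> 0 < omega_combo_poly N u.
Proof.
intros Hu; set (t := u - 1); set (s := N - 3).
assert (Ht : 0 < t) by (unfold t; lra); assert (Hs : 0 <= s) by (unfold s; lra).
assert (Hq : 0 < 8 - 8 * (t * s) + 42 * (t * s) ^ 2) by nra.
set (q := 8 - 8 * (t * s) + 42 * (t * s) ^ 2) in Hq.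
replace (omega_combo_poly N u) with
  (q + 16 * t + 158 * t ^ 2 + 140 * t ^ 2 * s
   + 354 * t ^ 3 + 320 * t ^ 3 * s + 78 * t ^ 3 * s ^ 2 + 309 * t ^ 4 + 254 * t ^ 4 * s
   + 53 * t ^ 4 * s ^ 2 + 120 * t ^ 5 + 88 * t ^ 5 * s + 16 * t ^ 5 * s ^ 2 + 18 * t ^ 6
   + 12 * t ^ 6 * s + 2 * t ^ 6 * s ^ 2) by (unfold q, omega_combo_poly, t, s; ring).
clearbody q.
repeat (apply Rplus_lt_le_0_compat; [|repeat apply Rmult_le_pos; try apply pow_le; lra]).
exact Hq.
Qed.

Lemma omega_combo_u_pos u : 1 < u -> 0 < omega_combo_u N u.
Proof.
intros Hu; unfold omega_combo_u.
pose proof (omega_combo_poly_pos u Hu).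
apply Rdiv_lt_0_compat; [apply Rmult_lt_0_compat; [apply pow_lt; nra|lra]|].
apply Rmult_lt_0_compat; [apply Rmult_lt_0_compat; [lra|apply pow_lt; lra]|apply pow_lt; lra].
Qed.

Lemma omega_combo_u_1 : omega_combo_u N 1 = / (N - 1) ^ 2.
Proof. unfold omega_combo_u, omega_combo_poly; field; lra. Qed.

Lemma omega_combo_u_continuous_1 : continuity_pt (omega_combo_u N) 1.
Proof.
apply derivable_continuous_pt, ex_derive_Reals_0.
unfold omega_combo_u, omega_combo_poly; auto_derive.
repeat apply Rmult_integral_contrapositive_currified; lra.
Qed.

Lemma omega_defect_u_bounded u0 :
  exists K, forall u, 1 <= u <= u0 -> Rabs (omega_defect_u N c u) <= K.
Proof.
destruct (Rle_dec 1 u0) as [H1u0|H1u0]; [|exists 0; intros u Hu; lra].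
destruct (continuity_ab_maj (fun u => Rabs (omega_defect_u N c u)) 1 u0 H1u0)
  as [umax [Hmax _]]; [|now exists (Rabs (omega_defect_u N c umax))].
intros u Hu; apply (continuity_pt_comp (omega_defect_u N c) Rabs); [|apply Rcontinuity_abs].
apply derivable_continuous_pt, ex_derive_Reals_0.
unfold omega_defect_u; auto_derive.
repeat apply Rmult_integral_contrapositive_currified; lra.
Qed.

Lemma lim_infty_comp_u_of F :
  continuity_pt F 1 -> lim_infty (fun x => F (u_of N c x)) (F 1).
Proof.
intros HF eps Heps.
destruct (HF eps Heps) as [d [Hd Hclose]].
set (k := 4 * (N - 1) * c); assert (Hk : 0 < k) by (unfold k; nra).
exists (k / d + 1); intros x Hx.
assert (Hkd : 0 < k / d) by (apply Rdiv_lt_0_compat; lra).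
pose proof (u_of_gt1 x ltac:(lra)) as Hu; pose proof (u_of_sqr x ltac:(lra)) as Hsq.
fold k in Hsq.
assert (Hkx : k / x < d).
{ apply (Rmult_lt_reg_r x); [lra|]; replace (k / x * x) with k by (field; lra).
  replace k with (d * (k / d)) at 1 by (field; lra); apply Rmult_lt_compat_l; lra. }
apply (Hclose (u_of N c x)); split; [split; [exact I|lra]|].
simpl; unfold R_dist; rewrite Rabs_pos_eq by lra; nra.
Qed.

End Reparametrization.

Lemma gamma_eq_alpha n c x : x0 n c <= x -> gamma n c x = alpha n c x.
Proof. intros Hx; unfold gamma; destruct (Rle_dec (x0 n c) x); [reflexivity|lra]. Qed.

Lemma derive_gamma n c x : (3 <= n)%nat -> 0 < c -> x0 n c <= x ->
  derivable_pt_lim (gamma n c) x (alpha1_u (INR n) (u_of (INR n) c x)).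
Proof.
intros Hn Hc Hx; pose proof (INR_ge_3 n Hn) as HN; pose proof (x0_pos n c Hn Hc) as Hx0.
destruct (Rle_lt_or_eq_dec _ _ Hx) as [Hlt|<-].
- apply (derivable_pt_lim_ext_gt (x0 n c) (alpha n c)); [exact Hlt| |].
  + intros y Hy; symmetry; apply gamma_eq_alpha; lra.
  + apply derive_alpha; auto; lra.
- assert (Halpha := derive_alpha (INR n) c HN Hc n (x0 n c) eq_refl Hx0).
  unfold gamma; apply derivable_pt_lim_glue; [exact Halpha| |].
  + apply is_derive_Reals; unfold beta; auto_derive; [exact I|].
    rewrite (Dlim_unique _ _ _ Halpha); ring.
  + unfold beta; ring.
Qed.

Section OmegaOnRay.

Variables (n : nat) (c : R) (w w1 w2 : R -> R).
Hypothesis Hn : (3 <= n)%nat.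
Hypothesis Hc : 0 < c.
Hypothesis Hdw : forall x, 0 < x -> derivable_pt_lim w x (w1 x).
Hypothesis Hdw1 : forall x, 0 < x -> derivable_pt_lim w1 x (w2 x).
Hypothesis Hform : forall x, x0 n c <= x -> w x = omega_formula n c x.

Local Notation N := (INR n).
Local Notation u := (u_of (INR n) c).

Let HN : 3 <= N := INR_ge_3 n Hn.
Let Hx0 : 0 < x0 n c := x0_pos n c Hn Hc.

Lemma w_on_ray x : x0 n c <= x -> w x = omega_u N c (u x).
Proof. intros Hx; rewrite Hform by exact Hx; apply omega_formula_in_u; auto; lra. Qed.

Lemma w1_on_ray x : x0 n c <= x -> w1 x = omega1_u N (u x).
Proof.
intros Hx; apply (derivative_eq_on_ray (x0 n c) w (fun y => omega_u N c (u y))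
  w1 (fun y => omega1_u N (u y))); [| |exact w_on_ray|exact Hx].
- intros y Hy; apply Hdw; lra.
- intros y Hy; apply derive_omega_u; auto; lra.
Qed.

Lemma omega_combo_on_ray x : x0 n c <= x -> 2 * x * w2 x + w1 x = omega_combo_u N (u x).
Proof.
intros Hx.
assert (Hw2 : w2 x = (omega_combo_u N (u x) - omega1_u N (u x)) / (2 * x)).
{ apply (derivative_eq_on_ray (x0 n c) w1 (fun y => omega1_u N (u y))
    w2 (fun y => (omega_combo_u N (u y) - omega1_u N (u y)) / (2 * y)));
    [| |exact w1_on_ray|exact Hx].
  - intros y Hy; apply Hdw1; lra.
  - intros y Hy; apply derive_omega1_u; auto; lra. }
rewrite Hw2, w1_on_ray by exact Hx; field; lra.
Qed.

Lemma gamma_omega_equation x : x0 n c <= x ->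
  exists g1, derivable_pt_lim (gamma n c) x g1 /\
    (gamma n c x + N * c) * x * (w1 x / w x) = 2 * gamma n c x - x * g1 - 3 * N * c.
Proof.
intros Hx; exists (alpha1_u N (u x)); split; [apply derive_gamma; auto|].
rewrite gamma_eq_alpha, w_on_ray, w1_on_ray by exact Hx.
apply omega_equation_in_u; auto; lra.
Qed.

Lemma omega_combo_x0_pos : 2 * x0 n c * w2 (x0 n c) + w1 (x0 n c) > 0.
Proof.
rewrite omega_combo_on_ray by lra.
apply Rlt_gt, omega_combo_u_pos; [exact HN|apply u_of_gt1; auto].
Qed.

Lemma omega_combo_lim_infty : lim_infty (fun x => 2 * x * w2 x + w1 x) (/ (N - 1) ^ 2).
Proof.
apply (lim_infty_ext_ge (x0 n c) _ (fun x => omega_combo_u N (u x)) _ omega_combo_on_ray).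
rewrite <- omega_combo_u_1 by exact HN.
apply lim_infty_comp_u_of, omega_combo_u_continuous_1; auto.
Qed.

Lemma omega_defect_bounded :
  cont_nonneg w 0 -> cont_nonneg w1 0 ->
  exists M, forall x, 0 <= x -> Rabs (w x - x * w1 x) <= M.
Proof.
intros Hw0 Hw10.
destruct (omega_defect_u_bounded N c HN (u (x0 n c))) as [K HK].
apply (bounded_on_nonneg _ (x0 n c) K).
- exact (limit_minus _ _ _ _ _ _ Hw0 (limit_mul _ _ _ _ _ _ (lim_x _ 0) Hw10)).
- intros x Hx; apply derivable_continuous_pt; eexists.
  apply derivable_pt_lim_minus; [apply Hdw; lra|].
  apply (derivable_pt_lim_mult id w1); [apply derivable_pt_lim_id|apply Hdw1; lra].
- intros x Hx; rewrite w_on_ray, w1_on_ray, omega_defect_in_u by (auto; lra).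
  apply HK; split; [left; apply u_of_gt1|apply u_of_decr]; auto; lra.
Qed.

End OmegaOnRay.

Theorem mainTheorem10 (n : nat) (c : R) (w w1 w2 : R -> R) :
  (3 <= n)%nat -> 0 < c ->
  (forall x, 0 <= x -> 0 < w x) ->
  (forall x, 0 < x -> derivable_pt_lim w x (w1 x)) ->
  (forall x, 0 < x -> derivable_pt_lim w1 x (w2 x)) ->
  (forall x, 0 <= x -> cont_nonneg w x /\ cont_nonneg w1 x /\ cont_nonneg w2 x) ->
  (forall x, x0 n c <= x -> w x = omega_formula n c x) ->
  (forall x, x0 n c <= x ->
     exists g1, derivable_pt_lim (gamma n c) x g1 /\
       (gamma n c x + INR n * c) * x * (w1 x / w x)
       = 2 * gamma n c x - x * g1 - 3 * INR n * c) /\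
  (2 * x0 n c * w2 (x0 n c) + w1 (x0 n c) > 0 /\
   exists L, L > 0 /\ lim_infty (fun x => 2 * x * w2 x + w1 x) L) /\
  (exists M, forall x, 0 <= x -> Rabs (w x - x * w1 x) <= M).
Proof.
intros Hn Hc _ Hdw Hdw1 Hcont Hform.
destruct (Hcont 0 (Rle_refl 0)) as [Hw0 [Hw10 _]].
split; [|split; [split|]].
- eapply gamma_omega_equation; eassumption.
- eapply omega_combo_x0_pos; eassumption.
- exists (/ (INR n - 1) ^ 2); split.
  + pose proof (INR_ge_3 n Hn); apply Rlt_gt, Rinv_0_lt_compat, pow_lt; lra.
  + eapply omega_combo_lim_infty; eassumption.
- eapply omega_defect_bounded; eassumption.
Qed.
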